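(* Let $G$ be a Hausdorff topological group with neutral element $e$ that is not NSS, and let $d:G\times G\to[0,\infty)$ be a continuous map with $d(e,e)=0$. Then there exists a sequence $(g_n)_{n\in\mathbb N}$ in $G\setminus\{e\}$ such that $\sum_{n\in\mathbb N} d(e,g_n^{m_n})<\infty$ for every sequence $(m_n)_{n\in\mathbb N}\in\mathbb Z^{\mathbb N}$.
   Context: A topological group $G$ is NSS if some neighborhood of $e$ contains no nontrivial subgroup of $G$. *)

From Stdlib Require Import Reals ZArith.
Open Scope R_scope.

Section TopGroupDefs.
Context {G : Type}.

Definition is_group (mul : G -> G -> G) (inv : G -> G) (e : G) : Prop :=
  (forall x y z, mul x (mul y z) = mul (mul x y) z) /\
  (forall x, mul e x = x) /\ (forall x, mul x e = x) /\
  (forall x, mul (inv x) x = e) /\ (forall x, mul x (inv x) = e).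

Definition is_topology (open : (G -> Prop) -> Prop) : Prop :=
  open (fun _ => True) /\ open (fun _ => False) /\
  (forall (F : (G -> Prop) -> Prop),
      (forall U, F U -> open U) -> open (fun x => exists U, F U /\ U x)) /\
  (forall U V, open U -> open V -> open (fun x => U x /\ V x)).

Definition is_topological_group (mul : G -> G -> G) (inv : G -> G) (e : G)
    (open : (G -> Prop) -> Prop) : Prop :=
  is_group mul inv e /\ is_topology open /\
  (forall x y (W : G -> Prop), open W -> W (mul x y) ->
     exists U V, open U /\ open V /\ U x /\ V y /\
       (forall u v, U u -> V v -> W (mul u v))) /\
  (forall W, open W -> open (fun x => W (inv x))).

Definition hausdorff (open : (G -> Prop) -> Prop) : Prop :=
  forall x y, x <> y -> exists U V, open U /\ open V /\ U x /\ V y /\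
     (forall z, U z -> V z -> False).

Definition neighborhood (open : (G -> Prop) -> Prop) (x : G) (N : G -> Prop) : Prop :=
  exists U, open U /\ U x /\ (forall z, U z -> N z).

Definition is_subgroup (mul : G -> G -> G) (inv : G -> G) (e : G) (H : G -> Prop) : Prop :=
  H e /\ (forall x y, H x -> H y -> H (mul x y)) /\ (forall x, H x -> H (inv x)).

Definition nontrivial_subgroup mul inv e (H : G -> Prop) : Prop :=
  is_subgroup mul inv e H /\ exists h, H h /\ h <> e.

Definition NSS mul inv e open : Prop :=
  exists N, neighborhood open e N /\
    forall H, nontrivial_subgroup mul inv e H -> ~ (forall z, H z -> N z).

Definition continuous2 (open : (G -> Prop) -> Prop) (d : G -> G -> R) : Prop :=
  forall x y eps, 0 < eps -> exists U V, open U /\ open V /\ U x /\ V y /\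
     forall u v, U u -> V v -> Rabs (d u v - d x y) < eps.

Fixpoint gpow_nat (mul : G -> G -> G) (e : G) (n : nat) (x : G) : G :=
  match n with O => e | S k => mul x (gpow_nat mul e k x) end.

Definition zpow (mul : G -> G -> G) (inv : G -> G) (e : G) (m : Z) (x : G) : G :=
  match m with
  | Z0 => e
  | Zpos p => gpow_nat mul e (Pos.to_nat p) x
  | Zneg p => inv (gpow_nat mul e (Pos.to_nat p) x)
  end.

End TopGroupDefs.

From Stdlib Require Import Reals ZArith Lra Classical ClassicalEpsilon.
Open Scope R_scope.

(** Failure of NSS says that every neighbourhood of [e]
    contains a nontrivial subgroup.  Continuity of [d] at [(e, e)] together
    with [d e e = 0] makes each sublevel set [{z | d e z < eps}] a
    neighbourhood of [e]; a nontrivial subgroup inside it contains some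
    [g <> e] together with all its integer powers, so [d e (g ^ k) < eps] for
    every [k].  Choosing such a [g_n] for [eps = (1/2)^n], the series
    [sum_n d e (g_n ^ (m n))] has nonnegative terms dominated by the
    convergent geometric series [sum_n (1/2)^n], hence converges for every
    choice of exponents [m]. *)

Lemma subgroup_zpow {G : Type} (mul : G -> G -> G) (inv : G -> G) (e : G)
    (H : G -> Prop) :
  is_subgroup mul inv e H -> forall x m, H x -> H (zpow mul inv e m x).
Proof.
  intros [He [Hmul Hinv]] x m Hx.
  assert (Hnat : forall k, H (gpow_nat mul e k x)) by (induction k; simpl; auto).
  destruct m; simpl; auto.
Qed.

Lemma sublevel_neighborhood {G : Type} (open : (G -> Prop) -> Prop) (e : G)
    (d : G -> G -> R) :
  continuous2 open d -> d e e = 0 ->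
  forall eps, 0 < eps -> neighborhood open e (fun z => d e z < eps).
Proof.
  intros Hcont Hdee eps Heps.
  destruct (Hcont e e eps Heps) as [U [V [_ [HV [HUe [HVe Hclose]]]]]].
  exists V; split; [exact HV | split; [exact HVe |]].
  intros z Hz.
  specialize (Hclose e z HUe Hz); rewrite Hdee, Rminus_0_r in Hclose.
  apply Rabs_def2 in Hclose; lra.
Qed.

Lemma not_NSS_small_subgroup {G : Type} (mul : G -> G -> G) (inv : G -> G)
    (e : G) (open : (G -> Prop) -> Prop) :
  ~ NSS mul inv e open ->
  forall N, neighborhood open e N ->
  exists H, nontrivial_subgroup mul inv e H /\ forall z, H z -> N z.
Proof.
  intros HnNSS N HN.
  apply NNPP; intro Hnone; apply HnNSS.
  exists N; split; [exact HN |].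
  intros H HH Hincl; apply Hnone; exists H; auto.
Qed.

Lemma small_powers_element {G : Type} (mul : G -> G -> G) (inv : G -> G)
    (e : G) (open : (G -> Prop) -> Prop) (d : G -> G -> R) :
  ~ NSS mul inv e open -> continuous2 open d -> d e e = 0 ->
  forall eps, 0 < eps ->
  exists g, g <> e /\ forall k, d e (zpow mul inv e k g) < eps.
Proof.
  intros HnNSS Hcont Hdee eps Heps.
  destruct (not_NSS_small_subgroup mul inv e open HnNSS _
              (sublevel_neighborhood open e d Hcont Hdee eps Heps))
    as [H [[Hsub [h [Hh Hhe]]] Hincl]].
  exists h; split; [exact Hhe |].
  intro k; apply Hincl, subgroup_zpow; assumption.
Qed.

Lemma half_geometric_series :
  Un_cv (fun N => sum_f_R0 (fun n => (/2) ^ n) N) 2.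
Proof.
  assert (Hhalf : Rabs (/2) < 1) by (rewrite Rabs_pos_eq; lra).
  intros eps Heps.
  destruct (GP_infinite (/2) Hhalf eps Heps) as [N HN].
  exists N; intros n Hn.
  replace (/ (1 - /2)) with 2 in HN by field.
  replace (sum_f_R0 (fun k => (/2) ^ k) n)
    with (sum_f_R0 (fun k => 1 * (/2) ^ k) n) by (apply sum_eq; intros; ring).
  exact (HN n Hn).
Qed.

Theorem lemma5p2 (G : Type) (mul : G -> G -> G) (inv : G -> G) (e : G)
    (open : (G -> Prop) -> Prop)
    (Htg : is_topological_group mul inv e open)
    (Hhaus : hausdorff open)
    (HnNSS : ~ NSS mul inv e open)
    (d : G -> G -> R)
    (Hdcont : continuous2 open d)
    (Hdnn : forall x y, 0 <= d x y)
    (Hdee : d e e = 0) :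
  exists g : nat -> G, (forall n, g n <> e) /\
    forall m : nat -> Z, exists l : R,
      infinite_sum (fun n => d e (zpow mul inv e (m n) (g n))) l.
Proof.
  assert (Hchoice : forall n : nat, exists g, g <> e /\
            forall k, d e (zpow mul inv e k g) < (/2) ^ n).
  { intro n; apply (small_powers_element mul inv e open d HnNSS Hdcont Hdee).
    apply pow_lt; lra. }
  destruct (choice _ Hchoice) as [g Hg].
  exists g; split; [intro n; exact (proj1 (Hg n)) |].
  intro m.
  destruct (Rseries_CV_comp (fun n => d e (zpow mul inv e (m n) (g n)))
              (fun n => (/2) ^ n)) as [l Hl].
  - intro n; split; [apply Hdnn | left; apply (proj2 (Hg n))].
  - exists 2; exact half_geometric_series.
  - exists l; exact Hl.
Qed.
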